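(* Let $\Gamma\in F(L)$ be homogeneous with $i$ letters $x$ and $j$ letters $y$, where $i+j$ is even and $i\le 3$. Then $\operatorname{div}(u_\Gamma)=0$.
   Context: $A=\mathbb{R}\langle x,y\rangle$; $L\subset A$ the free Lie algebra on $x,y$. $\operatorname{tr}$ is the projection $A\to A/\operatorname{span}\{ab-ba\}$. $F(L)$ is the quotient of $L\otimes L$ by the span of $a\otimes b-b\otimes a$ and $a\otimes[b,c]-[a,b]\otimes c$, regarded inside $A/\operatorname{span}\{ab-ba\}$ via $a\otimes b\mapsto\operatorname{tr}(ab)$. For $x_0\in\{x,y\}$, $\partial_{x_0}$ maps cyclic words by $\operatorname{tr}(a_1\cdots a_n)\mapsto\sum_{i:\,a_i=x_0}a_{i+1}\cdots a_n a_1\cdots a_{i-1}$. For $\Gamma\in F(L)$, $u_\Gamma$ is the derivation of $L$ with $u_\Gamma(x)=\partial_y\Gamma$, $u_\Gamma(y)=-\partial_x\Gamma$. For $l\in A$, $\partial^L_{x_0}(l)=\sum\partial^1\epsilon(\partial^2)$, where $\sum\partial^1\otimes\partial^2$ is the sum over occurrences of $x_0$ in monomials of (prefix)$\otimes$(suffix), and $\epsilon$ is the constant term. $\operatorname{div}(u)=\operatorname{tr}(\partial^L_x(u(x))+\partial^L_y(u(y)))$. *)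

From mathcomp Require Import all_boot all_algebra.
From mathcomp Require Import reals.
Set Implicit Arguments. Unset Strict Implicit. Unset Printing Implicit Defensive.
Import GRing.Theory Num.Theory.
Local Open Scope ring_scope.

Definition word := seq bool.
Definition lx : bool := false.
Definition ly : bool := true.

Section FreeAlg.
Variable R : realType.

(* Elements of R<x,y> as coefficient functions on words (Cauchy product);
   all objects in the statement are polynomial (finitely supported). *)
Definition A := word -> R.
Definition zeroA : A := fun _ => 0.
Definition addA (f g : A) : A := fun w => f w + g w.
Definition oppA (f : A) : A := fun w => - f w.
Definition subA (f g : A) : A := addA f (oppA g).
Definition scaleA (c : R) (f : A) : A := fun w => c * f w.
Definition mulA (f g : A) : A :=
  fun w => \sum_(k < (size w).+1) f (take k w) * g (drop k w).
Definition monA (u : word) : A := fun w => (w == u)%:R.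
Definition xA : A := monA [:: lx].
Definition yA : A := monA [:: ly].
Definition brA (a b : A) : A := subA (mulA a b) (mulA b a).
Definition sumA (n : nat) (f : nat -> A) : A := fun w => \sum_(k < n) f k w.

Definition is_poly (f : A) : Prop :=
  exists n, forall w : word, (n <= size w)%N -> f w = 0.

(* The free Lie algebra L: the smallest subspace of A containing x, y and
   closed under the commutator bracket. *)
Inductive inL : A -> Prop :=
| inL_x : inL xA
| inL_y : inL yA
| inL_zero : inL zeroA
| inL_add a b : inL a -> inL b -> inL (addA a b)
| inL_scale c a : inL a -> inL (scaleA c a)
| inL_br a b : inL a -> inL b -> inL (brA a b).

(* span{ab - ba : a, b in A}; tr p = tr q  iff  comm_span (p - q). *)
Inductive comm_span : A -> Prop :=
| cs_zero : comm_span zeroA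
| cs_comm a b : is_poly a -> is_poly b -> comm_span (brA a b)
| cs_add p q : comm_span p -> comm_span q -> comm_span (addA p q)
| cs_scale c p : comm_span p -> comm_span (scaleA c p).

(* tr G lies in F(L) = span{ tr(ab) : a, b in L } *)
Definition inFL (G : A) : Prop :=
  exists n (a b : nat -> A),
    (forall k, (k < n)%N -> inL (a k) /\ inL (b k)) /\
    comm_span (subA G (sumA n (fun k => mulA (a k) (b k)))).

Definition homogeneous (G : A) (i j : nat) : Prop :=
  forall w : word, G w != 0 ->
    count (pred1 lx) w = i /\ count (pred1 ly) w = j.

(* cyclic derivative on a monomial a_1...a_n:
   sum_{k : a_k = x0} a_{k+1}...a_n a_1...a_{k-1} *)
Definition dcyc_mon (x0 : bool) (w : word) : A :=
  sumA (size w) (fun k => if nth lx w k == x0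
                          then monA (drop k.+1 w ++ take k w) else zeroA).
(* linear extension (only words of length |v|+1 contribute to v) *)
Definition dcyc (x0 : bool) (G : A) : A :=
  fun v => \sum_(t : (size v).+1.-tuple bool) G t * dcyc_mon x0 t v.

(* d^L_{x0} on a monomial: sum over occurrences of prefix * eps(suffix) *)
Definition dL_mon (x0 : bool) (w : word) : A :=
  sumA (size w) (fun k => if nth lx w k == x0
                          then scaleA ((drop k.+1 w == [::])%:R) (monA (take k w))
                          else zeroA).
Definition dL (x0 : bool) (l : A) : A :=
  fun v => \sum_(t : (size v).+1.-tuple bool) l t * dL_mon x0 t v.

(* u_Gamma given by its values (u(x), u(y)) = (d_y Gamma, - d_x Gamma) *)
Definition u_Gamma (G : A) : A * A := (dcyc ly G, oppA (dcyc lx G)).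

(* div(u) = tr(d^L_x(u(x)) + d^L_y(u(y))); we return the argument of tr *)
Definition divA (u : A * A) : A := addA (dL lx u.1) (dL ly u.2).

End FreeAlg.

(* The trace of f is recorded by its cyclic sums cycsum f v = sum_k f (rot k v):
   f lies in span{ab - ba} iff f has no constant term and all its cyclic sums
   vanish.  The antipode S w = (-1)^|w| rev w negates Lie elements and reverses
   products, so tr(ab) is S-invariant for a, b in L, and hence so is tr Gamma.
   As div(u_Gamma) has coefficient tr Gamma (y v x) - tr Gamma (x v y) at v, it
   is S-skew.  By homogeneity only words v with i - 1 <= 2 letters x and of even
   length i + j - 2 matter; such a v has the form y^p c y^s with c a palindrome,
   so rev v is a rotation of v and the cyclic sum of div(u_Gamma) at v equals
   its own negative. *)

From Stdlib Require Import FunctionalExtensionality.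
From mathcomp Require Import all_boot all_algebra.
From mathcomp Require Import reals zify.
Set Implicit Arguments. Unset Strict Implicit. Unset Printing Implicit Defensive.
Import GRing.Theory Num.Theory.
Local Open Scope ring_scope.

Lemma sumr_ord_shift (V : nmodType) n (F : nat -> V) :
  F n = F 0%N -> \sum_(k < n) F k.+1 = \sum_(k < n) F k.
Proof.
case: n => [|n] Fn; first by rewrite !big_ord0.
by rewrite big_ord_recr big_ord_recl /= Fn addrC.
Qed.

Lemma count_rot (T : eqType) (p : pred T) k (s : seq T) : count p (rot k s) = count p s.
Proof. by apply/permP; rewrite perm_rot. Qed.

Section CyclicSum.
Variable R : realType.
Implicit Types (f g : A R) (v : word).

Definition cycsum f v : R := \sum_(k < size v) f (rot k v).

Lemma cycsum_rot1 f v : cycsum f (rot 1 v) = cycsum f v.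
Proof.
rewrite /cycsum size_rot -[RHS](sumr_ord_shift (F := fun k => f (rot k v))).
  by apply: eq_bigr => k _; rewrite rot_rot -rotS.
by rewrite rot_size rot0.
Qed.

Lemma cycsum_rot f m v : cycsum f (rot m v) = cycsum f v.
Proof.
elim: m => [|m IHm]; first by rewrite rot0.
have [m_lt | m_ge] := ltnP m (size v); last by rewrite !rot_oversize // ltnW.
by rewrite rotS // cycsum_rot1.
Qed.

Lemma cycsum_rotr f v : \sum_(k < size v) f (rotr k v) = cycsum f v.
Proof.
rewrite (reindex_inj rev_ord_inj) /= -[RHS](sumr_ord_shift (F := fun k => f (rot k v))).
  by apply: eq_bigr => k _; rewrite /rotr; congr (f (rot _ v)); have := ltn_ord k; lia.
by rewrite rot_size rot0.
Qed.

Lemma cycsum_rev f v : cycsum f (rev v) = cycsum (f \o rev) v.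
Proof.
by rewrite -cycsum_rotr /cycsum size_rev; apply: eq_bigr => k _; rewrite /= rev_rot.
Qed.

Lemma cycsum_mulA f g v : cycsum (mulA f g) v =
  \sum_(m < (size v).+1) cycsum (fun w => f (take m w) * g (drop m w)) v.
Proof. by rewrite /cycsum /mulA exchange_big; apply: eq_bigr => k _; rewrite size_rot. Qed.

Lemma cycsum_mulAC f g v : cycsum (mulA f g) v = cycsum (mulA g f) v.
Proof.
rewrite !cycsum_mulA (reindex_inj rev_ord_inj) /=; apply: eq_bigr => m _.
have m_le : (m <= size v)%N by rewrite -ltnS.
rewrite subSS -(cycsum_rot _ m v) /cycsum size_rot; apply: eq_bigr => k _.
rewrite rot_rot; set w := rot k v.
have size_dw : size (drop m w) = (size v - m)%N by rewrite size_drop size_rot.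
by rewrite /(rot m w) -size_dw take_size_cat // drop_size_cat // mulrC.
Qed.

Lemma cycsum_add f g v : cycsum (addA f g) v = cycsum f v + cycsum g v.
Proof. exact: big_split. Qed.

Lemma cycsum_opp f v : cycsum (oppA f) v = - cycsum f v.
Proof. exact: sumrN. Qed.

Lemma cycsum_scale c f v : cycsum (scaleA c f) v = c * cycsum f v.
Proof. by rewrite /cycsum mulr_sumr. Qed.

Lemma cycsum_sumA n (F : nat -> A R) v :
  cycsum (sumA n F) v = \sum_(k < n) cycsum (F k) v.
Proof. exact: exchange_big. Qed.

Lemma cycsum_comm_span c v : comm_span c -> cycsum c v = 0.
Proof.
elim=> [|a b _ _|p q _ cp _ cq|d p _ cp].
- exact: big1.
- by rewrite cycsum_add cycsum_opp cycsum_mulAC subrr.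
- by rewrite cycsum_add cp cq addr0.
- by rewrite cycsum_scale cp mulr0.
Qed.

Lemma cycsum_eq_comm_span f g v : comm_span (subA f g) -> cycsum f v = cycsum g v.
Proof. by move/(cycsum_comm_span v); rewrite cycsum_add cycsum_opp => /subr0_eq. Qed.

Lemma cycsum_neq0 f v : cycsum f v != 0 -> exists k, f (rot k v) != 0.
Proof.
move=> nz; have /existsP[k nz_k] : [exists k : 'I_(size v), f (rot k v) != 0].
  apply: contraLR nz => /existsPn all0; rewrite negbK; apply/eqP/big1 => k _.
  exact/eqP/negPn/all0.
by exists k.
Qed.

Lemma cycsum_homogeneous f i j v : homogeneous f i j -> cycsum f v != 0 ->
  count (pred1 lx) v = i /\ count (pred1 ly) v = j.
Proof. by move=> hom /cycsum_neq0[k /hom]; rewrite !count_rot. Qed.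

End CyclicSum.

Lemma sum_tuple_indicator (R : pzSemiRingType) (T : finType) n (F : seq T -> R)
    (s : seq T) :
  \sum_(t : n.-tuple T) F t * (s == t :> seq T)%:R = if size s == n then F s else 0.
Proof.
case: eqP => [size_s | size_s].
  rewrite (bigD1 (Tuple (introT eqP size_s))) //= eqxx mulr1 big1 ?addr0 // => t t_ne.
  suff /negbTE-> : s != t by rewrite mulr0.
  by apply: contra t_ne => /eqP s_t; apply/eqP/val_inj.
rewrite big1 // => t _; case: eqP => [s_t | _]; last exact: mulr0.
by rewrite s_t size_tuple in size_s.
Qed.

Section CommSpan.
Variable R : realType.
Implicit Types (f g : A R) (v : word).

Lemma comm_span_ext f g : comm_span f -> f =1 g -> comm_span g.
Proof. by move=> span_f /functional_extensionality <-. Qed.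

Lemma comm_span_sum (I : Type) (r : seq I) (P : pred I) (F : I -> A R) :
  (forall i, P i -> comm_span (F i)) -> comm_span (fun v => \sum_(i <- r | P i) F i v).
Proof.
move=> span_F; elim: r => [|i r IHr].
  by apply: comm_span_ext (cs_zero R) _ => v; rewrite big_nil.
case P_i: (P i).
  by apply: comm_span_ext (cs_add (span_F i P_i) IHr) _ => v; rewrite big_cons P_i.
by apply: comm_span_ext IHr _ => v; rewrite big_cons P_i.
Qed.

Lemma is_poly_monA u : is_poly (monA R u).
Proof.
exists (size u).+1 => w; rewrite /monA; case: eqP => [->|//].
by rewrite ltnn.
Qed.

Lemma monA_mul a b w : mulA (monA R a) (monA R b) w = monA R (a ++ b) w.
Proof.
rewrite /mulA /monA; case: (eqVneq w (a ++ b)) => [->|w_ne]; last first.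
  rewrite big1 // => k _; case: eqP => [take_k|]; last by rewrite mul0r.
  case: eqP => [drop_k|]; last by rewrite mulr0.
  by rewrite -take_k -drop_k cat_take_drop eqxx in w_ne.
have a_lt : (size a < (size (a ++ b)).+1)%N by rewrite ltnS size_cat leq_addr.
rewrite (bigD1 (Ordinal a_lt)) //= take_size_cat // drop_size_cat // !eqxx mulr1.
rewrite big1 ?addr0 // => k k_ne.
suff /negbTE-> : take k (a ++ b) != a by rewrite mul0r.
apply: contra k_ne => /eqP take_k; apply/eqP/val_inj => /=.
have := size_take_min k (a ++ b); rewrite take_k => ->.
by apply/esym/minn_idPl; rewrite -ltnS.
Qed.

Lemma comm_span_monA_rot t m : comm_span (fun v => monA R t v - monA R (rot m t) v).
Proof.
apply: comm_span_ext (cs_comm (is_poly_monA (take m t)) (is_poly_monA (drop m t))) _ => v.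
by rewrite /brA /subA /addA /oppA !monA_mul cat_take_drop.
Qed.

Lemma comm_span_homog_part f n : (forall v, cycsum f v = 0) ->
  comm_span (fun v => if size v == n.+1 then f v else 0).
Proof.
move=> cyc0; set m := n.+1.
(* A monomial minus the average of its rotations is a sum of commutators, and
   the averages add up to cycsum f v / m = 0. *)
pose avg t v := m%:R^-1 * \sum_(k < m) (monA R t v - monA R (rotr k t) v).
apply: (@comm_span_ext (fun v => \sum_(t : m.-tuple bool) f t * avg t v)).
  apply: comm_span_sum => t _; apply: cs_scale; apply: cs_scale.
  by apply: comm_span_sum => k _; apply: comm_span_monA_rot.
move=> v.
have rot_part : \sum_(t : m.-tuple bool) f t * \sum_(k < m) monA R (rotr k t) v = 0.
  transitivity (\sum_(k < m) \sum_(t : m.-tuple bool) f t * (rot k v == t :> word)%:R).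
    rewrite exchange_big /=; apply: eq_bigr => t _; rewrite mulr_sumr.
    apply: eq_bigr => k _; congr (_ * _%:R).
    by rewrite (can2_eq (rotK k) (rotrK k)).
  under eq_bigr do rewrite sum_tuple_indicator size_rot.
  by case: eqP => [<-|_]; [exact: cyc0 | exact: big1].
have avgE t : avg t v = monA R t v - m%:R^-1 * \sum_(k < m) monA R (rotr k t) v.
  rewrite /avg sumrB sumr_const card_ord -[monA R t v *+ m]mulr_natl.
  by rewrite mulrBr mulKf ?pnatr_eq0.
under eq_bigr => t _ do rewrite avgE mulrBr mulrCA.
by rewrite sumrB -mulr_sumr rot_part mulr0 subr0 (sum_tuple_indicator _ f).
Qed.

Lemma comm_span_of_cycsum f : is_poly f -> f [::] = 0 ->
  (forall v, cycsum f v = 0) -> comm_span f.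
Proof.
move=> [N f_N] f_nil cyc0.
apply: (@comm_span_ext (fun v => \sum_(n < N) if size v == n.+1 then f v else 0)).
  by apply: comm_span_sum => n _; apply: comm_span_homog_part.
move=> [|c v]; first by rewrite big1.
rewrite /= (eq_bigr (fun n : 'I_N => if n == size v :> nat then f (c :: v) else 0)).
  rewrite -big_mkcond (big_ord1_eq _ (fun=> f (c :: v))); case: ltnP => // N_le.
  by rewrite f_N // leqW.
by move=> n _; rewrite eqSS eq_sym.
Qed.

End CommSpan.

Section Antipode.
Variable R : realType.
Implicit Types (f g a b : A R) (u v : word).

Definition antipode f : A R := fun u => (-1) ^+ size u * f (rev u).

Lemma antipode_mulA f g u : antipode (mulA f g) u = mulA (antipode g) (antipode f) u.
Proof.
rewrite /antipode /mulA size_rev mulr_sumr (reindex_inj rev_ord_inj) /=.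
apply: eq_bigr => m _; have m_le : (m <= size u)%N by rewrite -ltnS.
rewrite subSS take_rev drop_rev subKn // mulrACA.
by rewrite -exprD -size_cat cat_take_drop mulrC [_ * (-1) ^+ _]mulrC [g _ * _]mulrC.
Qed.

Lemma antipode_monA w u : antipode (monA R w) u = (-1) ^+ size w * monA R (rev w) u.
Proof.
rewrite /antipode /monA (can2_eq revK revK).
by case: eqP => [->|_]; rewrite ?size_rev ?mulr0.
Qed.

Lemma mulA_oppA f g u : mulA (oppA f) (oppA g) u = mulA f g u.
Proof. by apply: eq_bigr => k _; rewrite mulrNN. Qed.

Lemma antipode_inL (l : A R) : inL l -> forall u, antipode l u = - l u.
Proof.
elim => [| | |a b _ IHa _ IHb|c a _ IHa|a b _ IHa _ IHb] u.
- by rewrite antipode_monA expr1 mulN1r.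
- by rewrite antipode_monA expr1 mulN1r.
- by rewrite /antipode /zeroA mulr0 oppr0.
- by rewrite /addA opprD -IHa -IHb; apply: mulrDr.
- by rewrite /scaleA -mulrN -IHa; apply: mulrCA.
transitivity (antipode (mulA a b) u - antipode (mulA b a) u); first exact: mulrBr.
rewrite !antipode_mulA (functional_extensionality _ _ IHa).
by rewrite (functional_extensionality _ _ IHb) !mulA_oppA opprB.
Qed.

Lemma cycsum_rev_antipode f v :
  cycsum f (rev v) = (-1) ^+ size v * cycsum (antipode f) v.
Proof.
rewrite cycsum_rev /cycsum mulr_sumr; apply: eq_bigr => k _.
by rewrite /antipode size_rot signrMK.
Qed.

Lemma cycsum_rev_mulA_inL a b v : inL a -> inL b ->
  cycsum (mulA a b) (rev v) = (-1) ^+ size v * cycsum (mulA a b) v.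
Proof.
move=> La Lb; rewrite cycsum_rev_antipode -[in RHS]cycsum_mulAC; congr (_ * _).
apply: eq_bigr => k _; rewrite antipode_mulA.
rewrite (functional_extensionality _ _ (antipode_inL La)).
by rewrite (functional_extensionality _ _ (antipode_inL Lb)) mulA_oppA.
Qed.

Lemma cycsum_rev_inFL (G : A R) v : inFL G ->
  cycsum G (rev v) = (-1) ^+ size v * cycsum G v.
Proof.
case=> n [a [b [Lab span]]].
rewrite !(cycsum_eq_comm_span _ span) !cycsum_sumA mulr_sumr; apply: eq_bigr => k _.
by have [La Lb] := Lab k (ltn_ord k); apply: cycsum_rev_mulA_inL.
Qed.

Lemma cycsum_skew_eq0 f v (m n : nat) : (forall w, antipode f w = - f w) ->
  ~~ odd (size v) -> rot m (rev v) = rot n v -> cycsum f v = 0.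
Proof.
move=> skew_f even_v conj_v.
have : cycsum f v = - cycsum f v.
  rewrite -{1}(cycsum_rot f n) -conj_v cycsum_rot cycsum_rev_antipode.
  rewrite -signr_odd (negbTE even_v) mul1r -cycsum_opp.
  by apply: eq_bigr => k _; apply: skew_f.
by move/eqP; rewrite -addr_eq0 -mulr2n mulrn_eq0 => /eqP.
Qed.

End Antipode.

Section Derivatives.
Variable R : realType.
Implicit Types (l G : A R) (v t : word).

Lemma dL_monE b t v : size t = (size v).+1 ->
  dL_mon R b t v = (t == rcons v b :> word)%:R.
Proof.
case/lastP: t => [//|p c]; rewrite size_rcons => -[size_p].
rewrite /dL_mon /sumA size_rcons big_ord_recr /= big1 ?add0r => [|k _]; last first.
  by case: ifP => // _; rewrite /scaleA drop_rcons // -size_eq0 size_rcons mul0r.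
rewrite nth_rcons ltnn eqxx drop_oversize ?size_rcons // -cats1 take_size_cat //.
rewrite cats1 eqseq_rcons /scaleA /monA.
by case: (c == b); rewrite ?andbT ?andbF //= mul1r eq_sym.
Qed.

Lemma dLE b l v : dL b l v = l (rcons v b).
Proof.
pose indicator (t : (size v).+1.-tuple bool) := l t * (rcons v b == t :> word)%:R.
rewrite /dL (eq_bigr indicator).
  by rewrite sum_tuple_indicator size_rcons eqxx.
by move=> t _; rewrite dL_monE ?size_tuple // eq_sym.
Qed.

Lemma rot_cons_eq b t t' k : (k < size t')%N ->
  (nth lx t' k == b) && (t == drop k.+1 t' ++ take k t') = (t' == rotr k (b :: t)).
Proof.
move=> k_lt; rewrite -(can2_eq (rotK k) (rotrK k)) /rot (drop_nth lx k_lt) /=.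
by rewrite eqseq_cons eq_sym [t == _]eq_sym.
Qed.

Lemma dcycE b G t : dcyc b G t = cycsum G (b :: t).
Proof.
rewrite -cycsum_rotr /dcyc /=.
transitivity (\sum_(t' : (size t).+1.-tuple bool) \sum_(k < (size t).+1)
   G t' * (rotr k (b :: t) == t' :> word)%:R).
  apply: eq_bigr => t' _; rewrite /dcyc_mon /sumA size_tuple mulr_sumr.
  apply: eq_bigr => k _; rewrite [rotr _ _ == _]eq_sym -rot_cons_eq ?size_tuple //.
  by case: ifP => _ //=; rewrite /zeroA.
rewrite exchange_big /=; apply: eq_bigr => k _.
by rewrite sum_tuple_indicator size_rotr /= eqxx.
Qed.

End Derivatives.

Lemma rot_rev_palindrome (T : Type) (y : T) (c : seq T) p s : rev c = c ->
  rot s (rev (nseq p y ++ c ++ nseq s y)) = rot p (nseq p y ++ c ++ nseq s y).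
Proof.
have rot_nseq n (w : seq T) : rot n (nseq n y ++ w) = w ++ nseq n y.
  by rewrite -{1}(size_nseq n y) rot_size_cat.
move=> rev_c; rewrite !rev_cat rev_c !rev_nseq -catA !rot_nseq.
by rewrite -!catA -!nseqD addnC.
Qed.

Lemma count_lx_ly (v : word) : (count (pred1 lx) v + count (pred1 ly) v)%N = size v.
Proof. by rewrite -(count_predC (pred1 lx)); congr (_ + _); apply: eq_count => -[]. Qed.

Lemma count_lx_eq0 (v : word) : count (pred1 lx) v = 0 -> v = nseq (size v) ly.
Proof. by elim: v => [|[] v IHv] //= /IHv <-. Qed.

Lemma split_first_lx (v : word) : (0 < count (pred1 lx) v)%N ->
  exists p r, v = nseq p ly ++ lx :: r.
Proof.
elim: v => [|[] v IHv] //=; last by exists 0, v.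
by move=> /IHv[p [r ->]]; exists p.+1, r.
Qed.

Lemma palindrome_decomposition (v : word) : (count (pred1 lx) v <= 2)%N ->
  exists p c s, rev c = c /\ v = nseq p ly ++ c ++ nseq s ly.
Proof.
have [v0 _|/split_first_lx[p [r ->]]] := posnP (count (pred1 lx) v).
  by exists (size v), [::], 0; rewrite cats0 -count_lx_eq0.
rewrite count_cat count_nseq mul0n add0n /= add1n ltnS.
have [r0 _|/split_first_lx[q [s ->]]] := posnP (count (pred1 lx) r).
  by exists p, [:: lx], (size r); rewrite -count_lx_eq0.
rewrite count_cat count_nseq mul0n add0n /= add1n ltnS leqn0 => /eqP s0.
exists p, (lx :: rcons (nseq q ly) lx), (size s).
by rewrite rev_cons rev_rcons rev_nseq /= cat_rcons -count_lx_eq0.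
Qed.

Lemma rev_conjugate (v : word) : (count (pred1 lx) v <= 2)%N ->
  exists a b, rot a (rev v) = rot b v.
Proof.
move=> /palindrome_decomposition[p [c [s [rev_c ->]]]].
by exists s, p; apply: rot_rev_palindrome.
Qed.

Section Divergence.
Variable R : realType.
Implicit Types (G : A R) (v : word).

Lemma divA_u_GammaE G v :
  divA (u_Gamma G) v = cycsum G (ly :: rcons v lx) - cycsum G (lx :: rcons v ly).
Proof. by rewrite /divA /u_Gamma /addA /= !dLE /oppA !dcycE. Qed.

Lemma divA_u_Gamma_nil G : divA (u_Gamma G) [::] = 0.
Proof. by rewrite divA_u_GammaE -[[:: ly; lx]]/(rot 1 [:: lx; ly]) cycsum_rot subrr. Qed.

Lemma divA_u_Gamma_support G i j v : homogeneous G i j -> divA (u_Gamma G) v != 0 ->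
  (count (pred1 lx) v).+1 = i /\ (count (pred1 ly) v).+1 = j.
Proof.
move=> hom; rewrite divA_u_GammaE.
have count_frame e c d :
    count (pred1 e) (c :: rcons v d) = ((c == e) + count (pred1 e) v + (d == e))%N.
  by rewrite /= -cats1 count_cat /= addn0 addnA.
have [-> | /(cycsum_homogeneous hom)] := eqVneq (cycsum G (ly :: rcons v lx)) 0.
  rewrite sub0r oppr_eq0 => /(cycsum_homogeneous hom).
  by rewrite !count_frame /= add0n addn0 addn1 add1n.
by rewrite !count_frame /= add0n addn0 addn1 add1n.
Qed.

Lemma antipode_divA_u_Gamma G : inFL G ->
  forall v, antipode (divA (u_Gamma G)) v = - divA (u_Gamma G) v.
Proof.
move=> FL_G v; rewrite /antipode !divA_u_GammaE.
have rev_frame c d : c :: rcons (rev v) d = rev (d :: rcons v c).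
  by rewrite rev_cons rev_rcons.
rewrite !rev_frame !(cycsum_rev_inFL _ FL_G) /= !size_rcons !exprS !mulN1r !opprK.
by rewrite -mulrBr signrMK opprB.
Qed.

End Divergence.

Theorem mainTheorem16 (R : realType) (G : A R) (i j : nat) :
  inFL G -> homogeneous G i j -> ~~ odd (i + j) -> (i <= 3)%N ->
  comm_span (divA (u_Gamma G)).
Proof.
move=> FL_G hom even_ij i_le3; have supp := divA_u_Gamma_support hom.
apply: comm_span_of_cycsum (divA_u_Gamma_nil G) _ => [|v].
  exists (i + j) => w; apply: contraTeq => /supp[<- <-].
  rewrite -(count_lx_ly w); lia.
have [//|/cycsum_neq0[k /supp]] := eqVneq (cycsum (divA (u_Gamma G)) v) 0.
rewrite !count_rot => -[cnt_x cnt_y].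
have even_v : ~~ odd (size v).
  by move: even_ij; rewrite -(count_lx_ly v) -cnt_x -cnt_y addSn addnS /= negbK.
have [a [b conj_v]] : exists a b, rot a (rev v) = rot b v by apply: rev_conjugate; lia.
exact: cycsum_skew_eq0 (antipode_divA_u_Gamma FL_G) even_v conj_v.
Qed.
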